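(* Let $R\ge1$, $m\ge R+2$, let $A$ be a real $m\times R$ matrix with $\operatorname{rank}(A)=R$ and $\iota_m\notin\operatorname{col}(A)$, let $C$ be a real symmetric positive semidefinite $m\times m$ matrix, and suppose $\operatorname{null}\big((A,\iota_m)^\top\big)\not\subseteq\operatorname{null}(C)$. Let $v^\ast$ be any minimiser of $v^\top Cv$ over $\mathcal V=\{v\in\mathbb R^m: v^\top A=0_R^\top,\ v^\top\iota_m=1\}$. Then there exists at least one vector $u^\ast\in\mathbb R^m$ such that $$u^{\ast\top}A=0_R^\top,\qquad u^{\ast\top}\iota_m=0,\qquad u^{\ast\top}Cu^\ast=v^{\ast\top}Cv^\ast,$$ and any such $u^\ast$ satisfies $u^{\ast\top}Cv^\ast=0$.
   Context: $\iota_m$ is the $m$-vector of ones; $0_R$ the zero vector in $\mathbb R^R$; $\operatorname{col}$ and $\operatorname{null}$ denote column space and null space; $(A,\iota_m)$ is the $m\times(R+1)$ matrix obtained by appending $\iota_m$ as a last column to $A$. A vector $u^\ast$ as in the claim is called a variance weights vector. *)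

From mathcomp Require Import all_boot all_order all_algebra.
From mathcomp Require Import reals.
Set Implicit Arguments. Unset Strict Implicit. Unset Printing Implicit Defensive.
Import Order.TTheory GRing.Theory Num.Theory.
Local Open Scope ring_scope.

Definition ones (R : ringType) (m : nat) : 'cV[R]_m := const_mx 1.

Definition augm (F : ringType) (m r : nat) (A : 'M[F]_(m, r)) : 'M[F]_(m, r + 1) :=
  row_mx A (ones F m).

(* column space membership: x in col(A) iff x^T in rowspace(A^T) *)
Definition in_col (F : fieldType) (m r : nat) (A : 'M[F]_(m, r)) (x : 'cV[F]_m) : bool :=
  (x^T <= A^T)%MS.

Definition in_null (F : ringType) (p m : nat) (B : 'M[F]_(p, m)) (x : 'cV[F]_m) : Prop :=
  B *m x = 0.

Definition psd (F : realFieldType) (m : nat) (C : 'M[F]_m) : Prop :=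
  C^T = C /\ forall x : 'cV[F]_m, 0 <= (x^T *m C *m x) 0 0.

Definition qf (F : ringType) (m : nat) (C : 'M[F]_m) (v : 'cV[F]_m) : F :=
  (v^T *m C *m v) 0 0.

Definition bf (F : ringType) (m : nat) (C : 'M[F]_m) (u v : 'cV[F]_m) : F :=
  (u^T *m C *m v) 0 0.

Definition feasible (F : ringType) (m r : nat) (A : 'M[F]_(m, r)) (v : 'cV[F]_m) : Prop :=
  v^T *m A = 0 /\ (v^T *m ones F m) 0 0 = 1.

From mathcomp Require Import all_boot all_order all_algebra.
From mathcomp Require Import reals.
From mathcomp Require Import ring lra.
From Stdlib Require Import Classical.
Set Implicit Arguments. Unset Strict Implicit. Unset Printing Implicit Defensive.
Import Order.TTheory GRing.Theory Num.Theory.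
Local Open Scope ring_scope.

(* Both parts come from looking at the quadratic form along a line.  Along
   v* + t u, for u orthogonal to A and to iota, the constraints stay satisfied,
   so t = 0 minimises t |-> v*'Cv* + 2t u'Cv* + t^2 u'Cu and the linear
   coefficient u'Cv* must vanish.  The same argument at a zero x of a
   semidefinite form shows x'Cx = 0 forces Cx = 0; hence a vector of
   null((A, iota)') outside null(C) has x'Cx > 0 and can be rescaled to reach
   the value v*'Cv*. *)

Lemma quadratic_ge0_lin_coef0 (F : realFieldType) (a c : F) :
  0 <= c -> (forall t, 0 <= t * a + t ^+ 2 * c) -> a = 0.
Proof.
move=> c_ge0 ge0_at.
have c1_neq0 : c + 1 != 0 by rewrite gt_eqF // ltr_wpDl.
have := ge0_at (- a / (c + 1)).
have -> : - a / (c + 1) * a + (- a / (c + 1)) ^+ 2 * c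
          = - (a / (c + 1)) ^+ 2 by field.
rewrite oppr_ge0 => sqr_le0.
have : (a / (c + 1)) ^+ 2 = 0 by apply/le_anti; rewrite sqr_le0 sqr_ge0.
by move/eqP; rewrite sqrf_eq0 mulf_eq0 invr_eq0 (negPf c1_neq0) orbF => /eqP.
Qed.

Section QuadraticForm.
Variables (F : realFieldType) (m : nat) (C : 'M[F]_m).

Lemma qfZ (k : F) x : qf C (k *: x) = k ^+ 2 * qf C x.
Proof.
by rewrite /qf -scalemxAr [(k *: x)^T]linearZ /= -!scalemxAl scalerA expr2 mxE.
Qed.

Lemma qf_addZ x y (t : F) :
  qf C (x + t *: y) = qf C x + t * (bf C x y + bf C y x) + t ^+ 2 * qf C y.
Proof.
rewrite /qf /bf mulmxDr -scalemxAr [(x + _)^T]linearD /= [(t *: y)^T]linearZ /=.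
by rewrite !mulmxDl -!scalemxAl !mxE; ring.
Qed.

Hypothesis C_sym : C^T = C.

Lemma bfC x y : bf C y x = bf C x y.
Proof.
rewrite /bf -[in LHS](trmxK (y^T *m C *m x)) mxE.
by rewrite !trmx_mul trmxK C_sym mulmxA.
Qed.

Lemma bf_eq0_of_min_on_line x y :
  0 <= qf C y -> (forall t, qf C x <= qf C (x + t *: y)) -> bf C y x = 0.
Proof.
move=> qy_ge0 x_min.
have twice_bf0 : bf C x y + bf C x y = 0.
  apply: (quadratic_ge0_lin_coef0 qy_ge0) => t.
  by have := x_min t; rewrite qf_addZ (bfC x y); lra.
by rewrite bfC; lra.
Qed.

End QuadraticForm.

Lemma psd_qf_eq0 (F : realFieldType) m (C : 'M[F]_m) x :
  psd C -> qf C x = 0 -> C *m x = 0.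
Proof.
move=> [C_sym C_ge0] qx0; apply/matrixP => i j; rewrite ord1 [RHS]mxE.
have := bf_eq0_of_min_on_line (x := x) C_sym (C_ge0 (delta_mx i 0)).
rewrite /bf trmx_delta -mulmxA -rowE mxE => -> // t.
by rewrite qx0; apply: C_ge0.
Qed.

Lemma tr_augm_null (F : comNzRingType) (m r : nat) (A : 'M[F]_(m, r)) x :
  in_null (augm A)^T x -> x^T *m A = 0 /\ x^T *m ones F m = 0.
Proof.
rewrite /in_null /augm tr_row_mx mul_col_mx => augm_x0.
have [Ax0 ones_x0] := eq_col_mx (etrans augm_x0 (esym (col_mx0 _ _ _ _))).
by rewrite -(trmxK A) -(trmxK (ones F m)) -!trmx_mul Ax0 ones_x0 !trmx0.
Qed.

Lemma feasible_addZ (F : comNzRingType) (m r : nat) (A : 'M[F]_(m, r)) v u t :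
  feasible A v -> u^T *m A = 0 -> (u^T *m ones F m) 0 0 = 0 ->
  feasible A (v + t *: u).
Proof.
move=> [vA v1] uA u1; rewrite /feasible linearD /= linearZ /= !mulmxDl.
by rewrite -!scalemxAl uA scaler0 addr0 mxE [X in _ + X]mxE v1 u1 mulr0 addr0.
Qed.

Theorem theorem2 (F : realType) (m r : nat) (A : 'M[F]_(m, r)) (C : 'M[F]_m)
  (vstar : 'cV[F]_m) :
  (1 <= r)%N -> (r + 2 <= m)%N ->
  \rank A = r ->
  ~~ in_col A (ones F m) ->
  psd C ->
  ~ (forall x : 'cV[F]_m, in_null (augm A)^T x -> in_null C x) ->
  feasible A vstar ->
  (forall v : 'cV[F]_m, feasible A v -> qf C vstar <= qf C v) ->
  (exists u : 'cV[F]_m,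
      u^T *m A = 0 /\ (u^T *m ones F m) 0 0 = 0 /\ qf C u = qf C vstar) /\
  (forall u : 'cV[F]_m,
      u^T *m A = 0 -> (u^T *m ones F m) 0 0 = 0 -> qf C u = qf C vstar ->
      bf C u vstar = 0).
Proof.
move=> _ _ _ _ C_psd not_null_sub vstar_feas vstar_min.
have [C_sym C_ge0] := C_psd.
split.
- have [x x_notin_null] := not_all_ex_not _ _ not_null_sub.
  have [x_null Cx_neq0] := imply_to_and _ _ x_notin_null.
  have [xA x1] := tr_augm_null x_null.
  have qx_gt0 : 0 < qf C x.
    by rewrite lt_def C_ge0 andbT; apply/eqP => /(psd_qf_eq0 C_psd).
  exists (Num.sqrt (qf C vstar / qf C x) *: x).
  rewrite [_^T]linearZ /= -!scalemxAl xA x1 !scaler0 mxE qfZ sqr_sqrtr.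
    by rewrite mulfVK ?gt_eqF.
  by rewrite divr_ge0 ?C_ge0 ?ltW.
- move=> u uA u1 _.
  apply: (bf_eq0_of_min_on_line C_sym (C_ge0 u)) => t.
  exact/vstar_min/feasible_addZ.
Qed.
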